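(* Let $(A,\mathfrak{m})$ be a Cohen–Macaulay local ring of dimension $d>0$ with infinite residue field. Let $M$ be a Cohen–Macaulay $A$-module of dimension $1$ with a presentation $G\xrightarrow{\phi}F\to M\to0$ ($F,G$ finite free) such that all entries of $\phi$ lie in $\mathfrak{m}^l$. Suppose $\operatorname{depth}G(A)\ge1$ and $x$ is an $A\oplus M$-superficial element. Then: 1. $(\mathfrak{m}^{i+1}M:_Mx)=\mathfrak{m}^iM$ for $i=0,\dots,l-1$. 2. If moreover $\mathfrak{m}^lM\subseteq xM$, then $\operatorname{depth}G(M)\ge1$.
   Context: $x\in\mathfrak{m}$ is superficial for a module $N$ if there is $c>0$ with $(\mathfrak{m}^nN:_Nx)\cap\mathfrak{m}^cN=\mathfrak{m}^{n-1}N$ for all $n>c$. $G(M)=\bigoplus_n\mathfrak{m}^nM/\mathfrak{m}^{n+1}M$, $G(A)=\bigoplus_n\mathfrak{m}^n/\mathfrak{m}^{n+1}$, depth with respect to the irrelevant maximal ideal of $G(A)$. *)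

From HB Require Import structures.
From mathcomp Require Import all_boot all_order all_algebra.
Set Implicit Arguments. Unset Strict Implicit. Unset Printing Implicit Defensive.
Import Order.TTheory GRing.Theory Num.Theory.
Local Open Scope ring_scope.

Section CommAlg.
Variable A : comNzRingType.

Definition is_ideal (I : A -> Prop) : Prop :=
  [/\ I 0, (forall a b, I a -> I b -> I (a + b)) & (forall r a, I a -> I (r * a))].

Definition is_prime (P : A -> Prop) : Prop :=
  [/\ is_ideal P, ~ P 1 & (forall a b, P (a * b) -> P a \/ P b)].

Definition is_maximal (m : A -> Prop) : Prop :=
  [/\ is_ideal m, ~ m 1 &
    (forall J : A -> Prop, is_ideal J -> (forall a, m a -> J a) ->
       (forall a, J a <-> m a) \/ J 1)].

Definition ideal_gen (s : seq A) (a : A) : Prop :=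
  exists c : seq A, a = \sum_(i < size s) c`_i * s`_i.

Definition noetherian : Prop :=
  forall I, is_ideal I -> exists s : seq A, forall a, I a <-> ideal_gen s a.

Definition local_ring (m : A -> Prop) : Prop :=
  [/\ noetherian, is_maximal m &
      (forall P, is_maximal P -> forall a, P a <-> m a)].

Definition infinite_residue (m : A -> Prop) : Prop :=
  ~ exists s : seq A, forall a, exists2 b, b \in s & m (a - b).

Fixpoint ipow (m : A -> Prop) (n : nat) : A -> Prop :=
  match n with
  | 0 => fun _ => True
  | n'.+1 => fun a => exists s : seq (A * A),
      (forall p, p \in s -> m p.1 /\ ipow m n' p.2) /\ a = \sum_(p <- s) p.1 * p.2
  end.

Definition prime_chain_above (I : A -> Prop) (n : nat) : Prop :=
  exists P : nat -> A -> Prop,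
    (forall i, (i <= n)%N -> is_prime (P i) /\ (forall a, I a -> P i a)) /\
    (forall i, (i < n)%N -> (forall a, P i a -> P i.+1 a) /\ exists a, P i.+1 a /\ ~ P i a).

Definition krull_dim_above (I : A -> Prop) (d : nat) : Prop :=
  prime_chain_above I d /\ ~ prime_chain_above I d.+1.

Section Modules.
Variable M : lmodType A.

Definition fin_gen : Prop :=
  exists s : seq M, forall v, exists c : seq A, v = \sum_(i < size s) c`_i *: s`_i.

Definition ann (a : A) : Prop := forall v : M, a *: v = 0.

Definition module_dim (d : nat) : Prop := krull_dim_above ann d.

Definition seqM (xs : seq A) (v : M) : Prop :=
  exists ws : seq M, v = \sum_(i < size xs) xs`_i *: ws`_i.

Definition is_reg_seq (m : A -> Prop) (xs : seq A) : Prop :=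
  [/\ (forall i, (i < size xs)%N -> m xs`_i),
      (forall i, (i < size xs)%N -> forall v,
          seqM (take i xs) (xs`_i *: v) -> seqM (take i xs) v) &
      exists v, ~ seqM xs v].

Definition depth_ge (m : A -> Prop) (n : nat) : Prop :=
  exists2 xs : seq A, size xs = n & is_reg_seq m xs.

Definition depth (m : A -> Prop) (d : nat) : Prop :=
  depth_ge m d /\ ~ depth_ge m d.+1.

Definition CM_of_dim (m : A -> Prop) (d : nat) : Prop :=
  module_dim d /\ depth m d.

Definition mpowM (m : A -> Prop) (n : nat) (v : M) : Prop :=
  exists s : seq (A * M),
    (forall p, p \in s -> ipow m n p.1) /\ v = \sum_(p <- s) p.1 *: p.2.

Definition superficial (m : A -> Prop) (x : A) : Prop :=
  m x /\ exists2 c : nat, (0 < c)%N & forall n, (c < n)%N -> forall v : M,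
     (mpowM m n (x *: v) /\ mpowM m c v) <-> mpowM m n.-1 v.

(* Elements of G(M) = (+)_n m^n M / m^(n+1) M are represented by finite
   sequences w with w_i in m^i M; w represents 0 iff w_i in m^(i+1) M. *)
Definition grM_elt (m : A -> Prop) (w : seq M) : Prop := forall i, mpowM m i w`_i.
Definition grM_zero (m : A -> Prop) (w : seq M) : Prop := forall i, mpowM m i.+1 w`_i.
(* g . w = 0 in G(M), for g representing an element of G(A) *)
Definition grM_act_zero (m : A -> Prop) (g : seq A) (w : seq M) : Prop :=
  forall k, mpowM m k.+1 (\sum_(i < k.+1) g`_i *: w`_(k - i)).

(* depth G(M) >= 1 (as a G(A)-module, w.r.t. the irrelevant ideal G(A)_+):
   G(A)_+ contains a G(M)-regular element *)
Definition depth_grM_ge1 (m : A -> Prop) : Prop :=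
  exists g : seq A, [/\ (forall i, ipow m i g`_i), ipow m 1 g`_0 &
     forall w, grM_elt m w -> grM_act_zero m g w -> grM_zero m w].
End Modules.

(* Elements of G(A) likewise represented by sequences g with g_i in m^i. *)
Definition grA_elt (m : A -> Prop) (g : seq A) : Prop := forall i, ipow m i g`_i.
Definition grA_zero (m : A -> Prop) (g : seq A) : Prop := forall i, ipow m i.+1 g`_i.
Definition grA_mul_zero (m : A -> Prop) (g h : seq A) : Prop :=
  forall k, ipow m k.+1 (\sum_(i < k.+1) g`_i * h`_(k - i)).

(* depth G(A) >= 1: the irrelevant ideal G(A)_+ contains a nonzerodivisor *)
Definition depth_grA_ge1 (m : A -> Prop) : Prop :=
  exists g : seq A, [/\ grA_elt m g, ipow m 1 g`_0 &
     forall h, grA_elt m h -> grA_mul_zero m g h -> grA_zero m h].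

Definition presentation_in_pow (M : lmodType A) (m : A -> Prop) (l : nat) : Prop :=
  exists (n p : nat) (Phi : 'M[A]_(p, n)) (pi : {linear 'rV[A]_n -> M}),
    [/\ (forall i j, ipow m l (Phi i j)),
        (forall v : M, exists u, pi u = v) &
        (forall u, pi u = 0 <-> exists w : 'rV[A]_p, u = w *m Phi)].
End CommAlg.

(* (1) Since depth G(A) >= 1, every power of m is Ratliff-Rush closed, and
   superficiality of x for A ⊕ M then gives (m^(n+1) : x) = m^n in A.  Lift v
   to F: the relations of M have entries in m^l, so for i < l the condition
   x v in m^(i+1) M puts the coefficients of the lift into (m^(i+1) : x) = m^i.
   (2) As depth M = 1 some y in m is M-regular; if x t = 0, superficiality puts
   y^c t into the intersection of all m^n M, which is 0 by Krull's intersection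
   theorem, so x is M-regular.  If m^l M is contained in x M, then (1) gives
   m^(l+j) M = x m^(l+j-1) M, and with regularity of x this yields
   (m^(i+2) M : x) ∩ m^i M = m^(i+1) M for every i: the initial form of x in
   G(A)_1 is G(M)-regular. *)

From HB Require Import structures.
From mathcomp Require Import all_boot all_order all_algebra.
From Stdlib Require Import ClassicalEpsilon Classical.
Import GRing.Theory.
Local Open Scope ring_scope.

Set Implicit Arguments. Unset Strict Implicit. Unset Printing Implicit Defensive.

(** * Submodules and powers of an ideal *)

Section Submodules.
Variables (A : comNzRingType) (V : lmodType A).

Definition is_submod (P : V -> Prop) :=
  [/\ P 0, (forall u v, P u -> P v -> P (u + v)) & (forall a u, P u -> P (a *: u))].

Section Closure.
Variables (P : V -> Prop) (sP : is_submod P).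

Lemma submod0 : P 0.
Proof. by case: sP. Qed.

Lemma submodD u v : P u -> P v -> P (u + v).
Proof. by case: sP => _ + _; apply. Qed.

Lemma submodZ a u : P u -> P (a *: u).
Proof. by case: sP => _ _; apply. Qed.

Lemma submodB u v : P u -> P v -> P (u - v).
Proof. by move=> Pu Pv; rewrite -scaleN1r; apply/submodD/submodZ. Qed.

Lemma submod_sum (T : eqType) (s : seq T) (F : T -> V) :
  (forall t, t \in s -> P (F t)) -> P (\sum_(t <- s) F t).
Proof.
elim: s => [|t s IH] Fs; first by rewrite big_nil; apply: submod0.
rewrite big_cons; apply: submodD; first by apply: Fs; rewrite mem_head.
by apply: IH => u us; apply: Fs; rewrite inE us orbT.
Qed.

End Closure.
End Submodules.

Section Ideals.
Variables (A : comNzRingType) (I : A -> Prop) (hI : is_ideal I).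

Lemma ideal_submod : is_submod (V := A^o) I.
Proof. by case: hI. Qed.

Lemma ideal0 : I 0.
Proof. exact: (submod0 ideal_submod). Qed.

Lemma idealD a b : I a -> I b -> I (a + b).
Proof. exact: (submodD ideal_submod). Qed.

Lemma idealMl r a : I a -> I (r * a).
Proof. exact: (submodZ ideal_submod). Qed.

Lemma idealMr r a : I a -> I (a * r).
Proof. by rewrite mulrC; apply: idealMl. Qed.

Lemma ideal_sum (T : eqType) (s : seq T) (F : T -> A) :
  (forall t, t \in s -> I (F t)) -> I (\sum_(t <- s) F t).
Proof. exact: (submod_sum ideal_submod). Qed.

End Ideals.

Lemma submod_ideal (A : comNzRingType) (I : A -> Prop) :
  is_submod (V := A^o) I -> is_ideal I.
Proof. by case. Qed.

Section IdealPowers.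
Variables (A : comNzRingType) (m : A -> Prop) (hm : is_ideal m).

Lemma ipow_ideal n : is_ideal (ipow m n).
Proof.
case: n => [|n] //=; split.
- by exists [::]; rewrite big_nil.
- move=> a b [s1 [H1 ->]] [s2 [H2 ->]]; exists (s1 ++ s2); split; last by rewrite big_cat.
  by move=> p; rewrite mem_cat => /orP [] ?; [apply: H1|apply: H2].
- move=> r a [s [H ->]]; exists [seq (r * p.1, p.2) | p <- s]; split.
  + by move=> p /mapP [q /H [q1 q2] ->]; split => //; apply: idealMl.
  + by rewrite big_map mulr_sumr; apply: eq_bigr => p _; rewrite mulrA.
Qed.

Lemma ipow0 n : ipow m n 0.
Proof. exact: (ideal0 (ipow_ideal n)). Qed.

Lemma ipowD n a b : ipow m n a -> ipow m n b -> ipow m n (a + b).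
Proof. exact: (idealD (ipow_ideal n)). Qed.

Lemma ipowMl n r a : ipow m n a -> ipow m n (r * a).
Proof. exact: (idealMl (ipow_ideal n)). Qed.

Lemma ipowMr n r a : ipow m n a -> ipow m n (a * r).
Proof. exact: (idealMr (ipow_ideal n)). Qed.

Lemma ipow_sum n (T : eqType) (s : seq T) (F : T -> A) :
  (forall t, t \in s -> ipow m n (F t)) -> ipow m n (\sum_(t <- s) F t).
Proof. exact: (ideal_sum (ipow_ideal n)). Qed.

Lemma ipow_mul a b u v : ipow m a u -> ipow m b v -> ipow m (a + b) (u * v).
Proof.
elim: a u => [|a IH] u /=; first by move=> _; apply: ipowMl.
move=> [s [H ->]] Hv; exists [seq (p.1, p.2 * v) | p <- s]; split.
- by move=> p /mapP [q /H [q1 q2] ->]; split => //; apply: IH.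
- by rewrite big_map mulr_suml; apply: eq_bigr => p _; rewrite mulrA.
Qed.

Lemma ipow1 u : m u -> ipow m 1 u.
Proof.
move=> mu; exists [:: (u, 1)]; rewrite big_seq1 mulr1.
by split=> // p; rewrite inE => /eqP ->.
Qed.

Lemma ipow_expr k u : m u -> ipow m k (u ^+ k).
Proof.
by move=> mu; elim: k => [//|k IH]; rewrite exprS; apply: (ipow_mul (ipow1 mu)).
Qed.

Lemma ipowS n u : ipow m n.+1 u -> ipow m n u.
Proof.
elim: n u => [|n IH] u //= [s [H ->]]; exists s; split => // p /H [p1 p2].
by split => //; apply: IH.
Qed.

Lemma ipow_mono n p u : (n <= p)%N -> ipow m p u -> ipow m n u.
Proof. by move/subnK <-; elim: (p - n)%N => [|k IH] // /ipowS. Qed.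

Lemma ipowS_sub n u : ipow m n.+1 u -> m u.
Proof.
move/(ipow_mono (isT : (1 <= n.+1)%N)) => [s [Hs ->]].
by apply: ideal_sum => // p /Hs [p1 _]; apply: idealMr.
Qed.

End IdealPowers.

Lemma ipow_subset (A : comNzRingType) (I J : A -> Prop) n :
  (forall a, I a -> J a) -> forall e, ipow I n e -> ipow J n e.
Proof.
move=> IJ; elim: n => [//|n IH] e /= [s [Hs ->]]; exists s; split => // p /Hs [p1 p2].
by split; [apply: IJ | apply: IH].
Qed.

Section PowerSubmodules.
Variables (A : comNzRingType) (m : A -> Prop) (hm : is_ideal m) (V : lmodType A).

Lemma mpowM_submod n : is_submod (mpowM (M := V) m n).
Proof.
split.
- by exists [::]; rewrite big_nil.
- move=> a b [s1 [H1 ->]] [s2 [H2 ->]]; exists (s1 ++ s2); split; last by rewrite big_cat.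
  by move=> p; rewrite mem_cat => /orP [] ?; [apply: H1|apply: H2].
- move=> r a [s [H ->]]; exists [seq (r * p.1, p.2) | p <- s]; split.
  + by move=> p /mapP [q qs ->]; apply: (ipowMl hm); apply: H.
  + by rewrite big_map scaler_sumr; apply: eq_bigr => p _; rewrite scalerA.
Qed.

Lemma mpowMZ n r (v : V) : ipow m n r -> mpowM m n (r *: v).
Proof.
move=> Hr; exists [:: (r, v)]; rewrite big_seq1.
by split=> // p; rewrite inE => /eqP ->.
Qed.

Lemma mpowM_scale a b r (v : V) :
  ipow m a r -> mpowM m b v -> mpowM m (a + b) (r *: v).
Proof.
move=> Hr [s [H ->]]; rewrite scaler_sumr; apply: (submod_sum (mpowM_submod _)) => p ps.
by rewrite scalerA; apply/mpowMZ/(ipow_mul hm)/H.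
Qed.

Lemma mpowM_mono n p (v : V) : (n <= p)%N -> mpowM m p v -> mpowM m n v.
Proof.
by move=> le [s [H ->]]; exists s; split => // q /H; apply: ipow_mono.
Qed.

Lemma mpowM0 (v : V) : mpowM m 0 v.
Proof. by rewrite -[v]scale1r; apply: mpowMZ. Qed.

Lemma mpowMS_ind n (P : V -> Prop) : is_submod P ->
  (forall q u, m q -> mpowM m n u -> P (q *: u)) ->
  forall v, mpowM m n.+1 v -> P v.
Proof.
move=> sP H v [s [Hs ->]]; apply: submod_sum => // p /Hs [t [Ht ->]].
rewrite scaler_suml; apply: submod_sum => // q /Ht [q1 q2].
by rewrite -scalerA; apply/H/mpowMZ.
Qed.

End PowerSubmodules.

Section SumModule.
Variables (A : comNzRingType) (m : A -> Prop) (hm : is_ideal m) (M : lmodType A).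
Notation V := ((A^o * M)%type).

Lemma mpowM_fst n (v : V) : mpowM m n v -> ipow m n v.1.
Proof.
move=> [s [H ->]]; rewrite (big_morph fst (id1 := 0) (op1 := +%R)) //.
by apply: (ipow_sum hm) => p /H; apply: ipowMr.
Qed.

Lemma mpowM_snd n (v : V) : mpowM m n v -> mpowM m n v.2.
Proof.
move=> [s [H ->]]; rewrite (big_morph snd (id1 := 0) (op1 := +%R)) //.
by apply: (submod_sum (mpowM_submod hm _ _)) => p /H; apply: mpowMZ.
Qed.

Lemma mpowM_pair n (v : V) : ipow m n v.1 -> mpowM m n v.2 -> mpowM m n v.
Proof.
case: v => a w /= Ha [s [H Hw]].
have -> : ((a, w) : V) = a *: (1, 0) + \sum_(p <- s) p.1 *: ((0, p.2) : V).
  apply/eqP; rewrite xpair_eqE; apply/andP; split; apply/eqP.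
  + rewrite (big_morph fst (id1 := 0) (op1 := +%R)) //= big1 ?addr0.
      exact: (esym (mulr1 a)).
    by move=> p _; exact: (mulr0 p.1).
  + by rewrite (big_morph snd (id1 := 0) (op1 := +%R)) //= scaler0 add0r Hw.
apply: (submodD (mpowM_submod hm _ _)); first exact: mpowMZ.
by apply: (submod_sum (mpowM_submod hm _ _)) => p /H; apply: mpowMZ.
Qed.

End SumModule.

(** * Colon ideals from depth G(A) >= 1 and superficiality *)

Section DepthGrA.
Variables (A : comNzRingType) (m : A -> Prop) (hm : is_ideal m).
Hypothesis hG : depth_grA_ge1 m.

(* The initial form of [a] in degree [j] is killed by the G(A)-regular element. *)
Lemma ipowS_of_mulm j a :
  ipow m j a -> (forall b, m b -> ipow m j.+2 (a * b)) -> ipow m j.+1 a.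
Proof.
move=> Ha Hab; case: hG => g [gA g0 greg].
pose h := rcons (nseq j (0 : A)) a.
have hE t : h`_t = if t == j then a else 0.
  rewrite /h nth_rcons size_nseq; case: ltngtP => // lt.
  by rewrite nth_nseq lt.
have := greg h _ _ j; rewrite hE eqxx; apply.
  by move=> t; rewrite hE; case: eqP => [->|_] //; apply: ipow0.
move=> k; apply: (ipow_sum hm) => i _; rewrite hE.
case: eqP => [Ek|_]; last by rewrite mulr0; apply: ipow0.
suff Hi i0 : ipow m i0 g`_i0 -> ipow m (i0 + j).+1 (g`_i0 * a).
  by have := Hi i (gA i); rewrite -Ek subnKC // -ltnS.
case: i0 => [|i0] gi.
  rewrite add0n mulrC; apply: (ipow_mono (leqnSn _)).
  by apply/Hab/(ipowS_sub hm g0).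
have [s [Hs ->]] := gi; rewrite mulr_suml; apply: (ipow_sum hm) => p /Hs [p1 p2].
have -> : (i0.+1 + j).+1 = (j.+2 + i0)%N by rewrite addnC -!addSn addnS addSn.
rewrite mulrC mulrA; apply: (ipow_mul hm) => //; exact: Hab.
Qed.

Lemma ipowS_of_mul_ipow k j a : ipow m j a ->
  (forall e, ipow m k e -> ipow m (j + k).+1 (a * e)) -> ipow m j.+1 a.
Proof.
elim: k j a => [|k IH] j a Ha H; first by have := H 1 I; rewrite mulr1 addn0.
apply: ipowS_of_mulm => // b mb.
apply: IH; first by rewrite mulrC; apply: (ipow_mul hm (ipow1 mb) Ha).
move=> e He; rewrite -mulrA addSn -addnS.
by apply: H; apply: (ipow_mul hm (ipow1 mb) He).
Qed.

(* Every power of [m] is Ratliff-Rush closed: [m^(n+k) : m^k = m^n]. *)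
Lemma ipow_of_mul_ipow n k a :
  (forall e, ipow m k e -> ipow m (n + k) (a * e)) -> ipow m n a.
Proof.
move=> H; suff: forall j, (j <= n)%N -> ipow m j a by apply.
elim=> [|j IH] jn //; apply: (ipowS_of_mul_ipow (k := k)); first exact/IH/ltnW.
move=> e He; apply: (ipow_mono (p := (n + k)%N)); first by rewrite -addSn leq_add2r.
exact: H.
Qed.

End DepthGrA.

Section Colon.
Variables (A : comNzRingType) (m : A -> Prop) (hm : is_ideal m) (M : lmodType A).

(* Test superficiality on [(a e, 0)] for [e] in [m^c], then cancel [m^c] by
   Ratliff-Rush closedness. *)
Lemma superficial_colon x : depth_grA_ge1 m -> superficial ((A^o * M)%type) m x ->
  forall n a, ipow m n.+1 (x * a) -> ipow m n a.
Proof.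
move=> hG [_ [c _ Hc]] n a Ha; apply: (ipow_of_mul_ipow hm hG (k := c)) => e He.
apply: (mpowM_fst hm (v := (a * e, 0))).
apply/(Hc (n + c).+1); first by rewrite ltnS leq_addl.
split; apply: mpowM_pair => //=.
- change (ipow m (n.+1 + c) (x * (a * e))).
  by rewrite mulrA; apply: (ipow_mul hm).
- by rewrite scaler0; apply: submod0 (mpowM_submod hm _ _).
- exact: ipowMl.
- exact: submod0 (mpowM_submod hm _ _).
Qed.

Lemma mpowM_lift n k (pi : {linear 'rV[A]_n -> M}) (w : M) :
  (forall v : M, exists u, pi u = v) -> mpowM m k w ->
  exists u, pi u = w /\ forall j, ipow m k (u 0 j).
Proof.
move=> pi_surj [s [Hs ->]]; elim: s Hs => [|q s IH] Hs.
  by exists 0; rewrite big_nil linear0; split => // j; rewrite mxE; apply: ipow0.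
have [uq Huq] := pi_surj q.2.
have [us [pi_us Hus]] := IH (fun r rs => Hs r (mem_behead (s := q :: s) rs)).
exists (q.1 *: uq + us); split; first by rewrite linearD linearZ_LR /= Huq pi_us big_cons.
move=> j; rewrite !mxE; apply: (ipowD hm) => //; apply: ipowMr => //.
by apply: Hs; rewrite mem_head.
Qed.

(* Since the relations lie in [m^l], a lift of [v] to [F] has its coefficients
   in [(m^(i+1) : x)] as soon as [x v] lies in [m^(i+1) M]. *)
Lemma presentation_colon x l i : (forall n a, ipow m n.+1 (x * a) -> ipow m n a) ->
  presentation_in_pow M m l -> (i < l)%N -> forall v : M,
  mpowM m i.+1 (x *: v) -> mpowM m i v.
Proof.
move=> colon [n [p [Phi [pi [Phi_m pi_surj pi_ker]]]]] il v Hxv.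
have [u0 Hu0] := pi_surj v.
have [u1 [Hu1 Hu1m]] := mpowM_lift pi_surj Hxv.
have [w Hw] : exists w, x *: u0 - u1 = w *m Phi.
  by apply/pi_ker; rewrite linearB linearZ_LR /= Hu0 Hu1 subrr.
have Hu0m j : ipow m i (u0 0 j).
  apply: colon; have -> : x * u0 0 j = (x *: u0 - u1) 0 j + u1 0 j by rewrite !mxE subrK.
  apply: (ipowD hm) => //; rewrite Hw !mxE; apply: (ipow_sum hm) => k _.
  by apply: (ipowMl hm); apply: (ipow_mono il); apply: Phi_m.
rewrite -Hu0 (row_sum_delta u0) linear_sum; apply: (submod_sum (mpowM_submod hm _ _)).
by move=> j _; rewrite linearZ_LR /=; apply: mpowMZ.
Qed.

End Colon.

(** * Noetherian modules over a local ring *)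

Section Span.
Variables (A : comNzRingType) (V : lmodType A).

Fixpoint lspan (s : seq V) : V -> Prop :=
  if s is b :: s' then fun v => exists a w, lspan s' w /\ v = a *: b + w
  else fun v => v = 0.

Lemma lspan_submod s : is_submod (lspan s).
Proof.
elim: s => [|b s [IH0 IHD IHZ]] /=.
  by split => [//|u v -> ->|a u ->]; rewrite ?addr0 ?scaler0.
split.
- by exists 0, 0; rewrite scale0r addr0.
- move=> u v [a [w [Hw ->]]] [a' [w' [Hw' ->]]]; exists (a + a'), (w + w').
  by split; [apply: IHD | rewrite scalerDl addrACA].
- move=> r u [a [w [Hw ->]]]; exists (r * a), (r *: w).
  by split; [apply: IHZ | rewrite scalerDr scalerA].
Qed.

Lemma lspan_mem s b : b \in s -> lspan s b.
Proof.
elim: s => [//|c s IH]; rewrite inE => /orP [/eqP ->|bs] /=.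
  by exists 1, 0; split; [apply: submod0 (lspan_submod s) | rewrite scale1r addr0].
by exists 0, b; split; [apply: IH | rewrite scale0r add0r].
Qed.

Lemma lspan_min s (P : V -> Prop) : is_submod P -> (forall b, b \in s -> P b) ->
  forall v, lspan s v -> P v.
Proof.
move=> sP; elim: s => [|b s IH] Hb v /=; first by move->; apply: submod0.
move=> [a [w [Hw ->]]]; apply: (submodD sP); first by apply/(submodZ sP)/Hb/mem_head.
by apply: IH => // c cs; apply: Hb; rewrite inE cs orbT.
Qed.

Lemma lspan_catl s1 s2 : forall v, lspan s1 v -> lspan (s1 ++ s2) v.
Proof.
by apply: lspan_min (lspan_submod _) _ => b bs; apply: lspan_mem; rewrite mem_cat bs.
Qed.

Lemma lspan_catr s1 s2 : forall v, lspan s2 v -> lspan (s1 ++ s2) v.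
Proof.
by apply: lspan_min (lspan_submod _) _ => b bs; apply: lspan_mem; rewrite mem_cat bs orbT.
Qed.

Lemma lspan_sum (s : seq V) (c : seq A) : lspan s (\sum_(i < size s) c`_i *: s`_i).
Proof.
apply: (submod_sum (lspan_submod s)) => i _.
exact/(submodZ (lspan_submod s))/lspan_mem/mem_nth.
Qed.

End Span.

Lemma fin_gen_lspan (A : comNzRingType) (M : lmodType A) :
  fin_gen M -> exists gens : seq M, forall v, lspan gens v.
Proof. by move=> [s Hs]; exists s => v; have [c ->] := Hs v; apply: lspan_sum. Qed.

Lemma ideal_gen_nth (A : comNzRingType) (s : seq A) i : (i < size s)%N -> ideal_gen s s`_i.
Proof.
move=> lt; exists (mkseq (fun j => (j == i)%:R) (size s)).
rewrite (bigD1 (Ordinal lt)) //= nth_mkseq // eqxx mul1r big1 ?addr0 //.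
move=> j /eqP ne; rewrite nth_mkseq //; case: eqP => [e|_]; last by rewrite mul0r.
by case: ne; apply: val_inj.
Qed.

Lemma noetherian_lspan (A : comNzRingType) : noetherian A -> forall I, is_ideal I ->
  exists cs : seq A, (forall c, c \in cs -> I c) /\ (forall a, I a -> lspan (V := A^o) cs a).
Proof.
move=> hN I hI; have [s Hs] := hN I hI; exists s; split.
  by move=> c /(nthP 0) [i lt <-]; apply/Hs; apply: ideal_gen_nth.
by move=> a /Hs [c ->]; apply: (lspan_sum (V := A^o)).
Qed.

Section NoetherianModules.
Variables (A : comNzRingType) (hN : noetherian A) (V : lmodType A).

Lemma lspan_lift_coef (P : V -> Prop) (b : V) (s : seq V) (cs : seq A) :
  (forall c, c \in cs -> exists v, P v /\ lspan s (v - c *: b)) ->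
  exists ws : seq V, (forall w, w \in ws -> P w) /\
    forall a, lspan (V := A^o) cs a -> exists w, lspan ws w /\ lspan s (w - a *: b).
Proof.
elim: cs => [|c cs IH] Hc.
  exists [::]; split => // a /= ->; exists 0; split => //.
  by rewrite scale0r subrr; apply: submod0 (lspan_submod s).
have [vc [Pvc Svc]] := Hc c (mem_head _ _).
have [ws [Hws1 Hws2]] := IH (fun c' cs' => Hc c' (mem_behead (s := c :: cs) cs')).
exists (vc :: ws); split; first by move=> w; rewrite inE => /orP [/eqP ->|/Hws1].
move=> a /= [r [a' [Ha' ->]]]; have [w' [Hw'1 Hw'2]] := Hws2 a' Ha'.
exists (r *: vc + w'); split; first by exists r, w'.
have -> : r *: vc + w' - (r *: (c : A^o) + a') *: b = r *: (vc - c *: b) + (w' - a' *: b).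
  by rewrite scalerBr scalerA scalerDl opprD addrACA.
by apply: (submodD (lspan_submod s)) => //; apply: (submodZ (lspan_submod s)).
Qed.

(* Induction on the generators: the coefficients of the first generator [b] in
   elements of [P] form an ideal, which is finitely generated. *)
Lemma noetherian_submod_fg (gens : seq V) (P : V -> Prop) :
  is_submod P -> (forall v, P v -> lspan gens v) ->
  exists t : seq V, (forall b, b \in t -> P b) /\ (forall v, P v -> lspan t v).
Proof.
elim: gens P => [|b s IH] P sP Hsub; first by exists [::]; split => // v /Hsub.
pose I a := exists v, P v /\ lspan s (v - a *: b).
have hI : is_ideal I.
  split.
  - by exists 0; rewrite scale0r subrr; split; [apply: submod0 sP | apply: submod0 (lspan_submod s)].
  - move=> a a' [v [Pv Sv]] [v' [Pv' Sv']]; exists (v + v'); split; first exact: submodD.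
    by rewrite scalerDl opprD addrACA; apply: (submodD (lspan_submod s)).
  - move=> r a [v [Pv Sv]]; exists (r *: v); split; first exact: submodZ.
    by rewrite -scalerA -scalerBr; apply: (submodZ (lspan_submod s)).
have [cs [csI Ics]] := noetherian_lspan hN hI.
have [ws [wsP Hws]] := lspan_lift_coef csI.
pose P' v := P v /\ lspan s v.
have sP' : is_submod P'.
  have sS := lspan_submod s.
  split => [|u v [Pu Su] [Pv Sv]|a u [Pu Su]]; split.
  - exact: (submod0 sP).
  - exact: (submod0 sS).
  - exact: (submodD sP).
  - exact: (submodD sS).
  - exact: (submodZ sP).
  - exact: (submodZ sS).
have [t' [t'P' Ht']] := IH P' sP' (fun v (H : P' v) => H.2).
exists (ws ++ t'); split; first by move=> w; rewrite mem_cat => /orP [/wsP|/t'P' []].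
move=> v Pv; have /= [a [w0 [Sw0 Ev]]] := Hsub v Pv.
have Ia : I a by exists v; split => //; rewrite Ev addrC addKr.
have [w [Sw Sw']] := Hws a (Ics a Ia).
have -> : v = w + (v - w) by rewrite addrC subrK.
apply: (submodD (lspan_submod _)); first exact: lspan_catl.
apply/lspan_catr/Ht'; split; first by apply: submodB (lspan_min sP wsP Sw).
have -> : v - w = (v - a *: b) - (w - a *: b) by rewrite opprB addrA subrK.
by apply: (submodB (lspan_submod s)) => //; rewrite Ev addrC addKr.
Qed.

Lemma noetherian_chain_stable (gens : seq V) (C : nat -> V -> Prop) :
  (forall v, lspan gens v) -> (forall n, is_submod (C n)) ->
  (forall n v, C n v -> C n.+1 v) -> exists n, forall v, C n.+1 v -> C n v.
Proof.
move=> Hg sC mC.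
have mC' n k v : (n <= k)%N -> C n v -> C k v.
  by move/subnK <-; elim: (k - n)%N => [//|j IH] Hv; rewrite addSn; apply/mC/IH.
pose U v := exists n, C n v.
have sU : is_submod U.
  split.
  - by exists 0%N; apply: submod0 (sC 0%N).
  - move=> u v [n Hu] [k Hv]; exists (maxn n k); apply: (submodD (sC _)).
      exact: mC' (leq_maxl _ _) Hu.
    exact: mC' (leq_maxr _ _) Hv.
  - by move=> a u [n Hu]; exists n; apply: submodZ.
have [t [tU Ut]] := noetherian_submod_fg sU (fun v _ => Hg v).
have [n Hn] : exists n, forall b, b \in t -> C n b.
  elim: t {Ut} tU => [|b t IHt] H; first by exists 0%N.
  have [n1 Hn1] := H b (mem_head _ _).
  have [n2 Hn2] := IHt (fun c ct => H c (mem_behead (s := b :: t) ct)).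
  exists (maxn n1 n2) => c; rewrite inE => /orP [/eqP ->|ct].
    exact: mC' (leq_maxl _ _) Hn1.
  exact: mC' (leq_maxr _ _) (Hn2 c ct).
by exists n => v Hv; apply: (lspan_min (sC n) Hn); apply: Ut; exists n.+1.
Qed.

(* Otherwise dependent choice builds a strictly increasing chain. *)
Lemma noetherian_maximal (gens : seq V) (F : (V -> Prop) -> Prop) P0 :
  (forall v, lspan gens v) -> (forall P, F P -> is_submod P) -> F P0 ->
  exists P, F P /\ forall Q, F Q -> (forall v, P v -> Q v) -> forall v, Q v -> P v.
Proof.
move=> Hg sF FP0; apply: NNPP => Hno.
have step (P : {P | F P}) : {Q : {P | F P} |
    (forall v, sval P v -> sval Q v) /\ ~ (forall v, sval Q v -> sval P v)}.
  case: P => P FP; apply: constructive_indefinite_description.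
  apply: NNPP => H; apply: Hno; exists P; split => // Q FQ PQ.
  by apply: NNPP => nQP; apply: H; exists (exist _ Q FQ).
pose ch := fix ch n := if n is k.+1 then sval (step (ch k)) else exist _ P0 FP0.
have [n Hn] := @noetherian_chain_stable gens (fun n => sval (ch n)) Hg
  (fun n => sF _ (svalP (ch n))) (fun n => (svalP (step (ch n))).1).
exact: (svalP (step (ch n))).2.
Qed.

End NoetherianModules.

Section LocalRing.
Variables (A : comNzRingType) (m : A -> Prop) (hL : local_ring m).

Lemma local_ideal : is_ideal m.
Proof. by case: hL => _ []. Qed.

Lemma local_noetherian : noetherian A.
Proof. by case: hL. Qed.

(* A maximal ideal containing [1 - a] and not [1] would have to be [m]. *)
Lemma local_1B_invertible a : m a -> exists r, r * (1 - a) = 1.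
Proof.
move=> ma; apply: NNPP => Hnu.
pose F (J : A -> Prop) := [/\ is_ideal J, (forall r, J (r * (1 - a))) & ~ J 1].
have FP0 : F (fun e => exists r, e = r * (1 - a)).
  split.
  - split.
    + by exists 0; rewrite mul0r.
    + by move=> u v [r ->] [r' ->]; exists (r + r'); rewrite mulrDl.
    + by move=> r u [r' ->]; exists (r * r'); rewrite mulrA.
  - by move=> r; exists r.
  - by move=> [r Hr]; apply: Hnu; exists r.
have span1 (e : A) : lspan (V := A^o) [:: 1] e.
  by exists e, 0; split => //; rewrite addr0 /GRing.scale /= mulr1.
have [P [[hP P1a Pn1] Pmax]] := noetherian_maximal (V := A^o) (F := F) local_noetherian span1
  (fun J '(And3 hJ _ _) => ideal_submod hJ) FP0.
have maxP : is_maximal P.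
  split => // J hJ PJ; apply: NNPP => H; apply: (H); left => e; split; last exact: PJ.
  apply: (Pmax J) => //; split => // [r|J1]; first exact: PJ.
  by apply: H; right.
case: hL => _ [hm m1 _] Huniq.
have m1a : m (1 - a) by apply/(Huniq P maxP); have := P1a 1; rewrite mul1r.
by apply: m1; rewrite -(subrK a 1); apply: idealD.
Qed.

End LocalRing.

Section PowersOfGenerators.
Variable A : comNzRingType.

Definition pideal (g u : A) := exists r, u = r * g.

Lemma pideal_ideal g : is_ideal (pideal g).
Proof.
split.
- by exists 0; rewrite mul0r.
- by move=> u v [r ->] [r' ->]; exists (r + r'); rewrite mulrDl.
- by move=> r u [r' ->]; exists (r * r'); rewrite mulrA.
Qed.

Lemma ipow_pideal g k e : ipow (pideal g) k e -> pideal (g ^+ k) e.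
Proof.
elim: k e => [|k IH] e /=; first by exists e; rewrite expr0 mulr1.
move=> [s [Hs ->]]; apply: (ideal_sum (pideal_ideal _)) => p /Hs [[r1 ->] /IH [r2 ->]].
by exists (r1 * r2); rewrite exprS mulrACA.
Qed.

Definition ideal_add (I J : A -> Prop) (e : A) := exists u w, [/\ I u, J w & e = u + w].

Lemma ideal_add_ideal I J : is_ideal I -> is_ideal J -> is_ideal (ideal_add I J).
Proof.
move=> hI hJ; split.
- by exists 0, 0; split; [apply: (ideal0 hI) | apply: (ideal0 hJ) | rewrite addr0].
- move=> u v [u1 [u2 [Iu1 Ju2 ->]]] [v1 [v2 [Iv1 Jv2 ->]]].
  exists (u1 + v1), (u2 + v2).
  by split; [apply: (idealD hI) | apply: (idealD hJ) | rewrite addrACA].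
- move=> r u [u1 [u2 [Iu1 Ju2 ->]]]; exists (r * u1), (r * u2).
  by split; [apply: (idealMl hI) | apply: (idealMl hJ) | rewrite mulrDr].
Qed.

Lemma ipow_ideal_add I J : is_ideal I -> is_ideal J -> forall p q e,
  ipow (ideal_add I J) (p + q) e -> ideal_add (ipow I p) (ipow J q) e.
Proof.
move=> hI hJ p q e; move En : (p + q)%N => n; elim: n p q e En => [|n IH] p q e.
  move/eqP; rewrite addn_eq0 => /andP [/eqP -> /eqP ->] _.
  by exists e, 0; split; [|apply: ipow0|rewrite addr0].
have hIJ := ideal_add_ideal (ipow_ideal hI p) (ipow_ideal hJ q).
move=> Hn [s [Hs ->]]; apply: (ideal_sum hIJ) => t /Hs [[u1 [w1 [Hu1 Hw1 ->]]] Ht2].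
rewrite mulrDl; apply: (idealD hIJ); clear hIJ.
- case: p Hn => [|p] Hn.
    by exists (u1 * t.2), 0; split; [|apply: ipow0|rewrite addr0].
  have [u' [w' [Hu' Hw' ->]]] := IH p q _ (eq_add_S _ _ Hn) Ht2.
  exists (u1 * u'), (u1 * w'); rewrite mulrDr; split => //.
    exact: (ipow_mul hI (ipow1 Hu1) Hu').
  exact: ipowMl.
- case: q Hn => [|q] Hn.
    by exists 0, (w1 * t.2); split; [apply: ipow0| |rewrite add0r].
  have [u' [w' [Hu' Hw' ->]]] := IH p q _ (eq_add_S _ _ (etrans (esym (addnS p q)) Hn)) Ht2.
  exists (w1 * u'), (w1 * w'); rewrite mulrDr; split => //.
    exact: ipowMl.
  exact: (ipow_mul hJ (ipow1 Hw1) Hw').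
Qed.

Lemma ipow_sub_of_gen_powers (S : A -> Prop) (cs : seq A) : is_ideal S ->
  (forall c, c \in cs -> exists k, S (c ^+ k)) ->
  exists n, forall e, ipow (lspan (V := A^o) cs) n e -> S e.
Proof.
move=> hS; elim: cs => [|g cs IH] Hc.
  exists 1%N => e He.
  have /= -> := @ipowS_sub A (lspan (V := A^o) [::])
    (submod_ideal (lspan_submod (V := A^o) [::])) 0%N e He.
  exact: ideal0.
have [k Hk] := Hc g (mem_head _ _).
have [n0 Hn0] := IH (fun c cs' => Hc c (mem_behead (s := g :: cs) cs')).
exists (k + n0)%N => e He.
have He' : ipow (ideal_add (pideal g) (lspan (V := A^o) cs)) (k + n0) e.
  apply: ipow_subset He => a /= [r [w [Hw ->]]]; exists (r * g), w; split => //.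
  by exists r.
have [u [w [/ipow_pideal [r ->] Hw ->]]] := ipow_ideal_add (pideal_ideal g)
  (submod_ideal (lspan_submod (V := A^o) cs)) He'.
by apply: (idealD hS) (Hn0 _ Hw); apply: (idealMl hS).
Qed.

End PowersOfGenerators.

(** * Krull's intersection theorem *)

Section ProductSubmodule.
Variables (A : comNzRingType) (V : lmodType A) (I : A -> Prop) (P : V -> Prop).

Definition submul (v : V) := exists s : seq (A * V),
  (forall p, p \in s -> I p.1 /\ P p.2) /\ v = \sum_(p <- s) p.1 *: p.2.

Lemma submul_submod : is_ideal I -> is_submod submul.
Proof.
move=> hI; split.
- by exists [::]; rewrite big_nil.
- move=> a b [s1 [H1 ->]] [s2 [H2 ->]]; exists (s1 ++ s2); split; last by rewrite big_cat.
  by move=> p; rewrite mem_cat => /orP [] ?; [apply: H1|apply: H2].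
- move=> r a [s [H ->]]; exists [seq (r * p.1, p.2) | p <- s]; split.
  + by move=> p /mapP [q /H [q1 q2] ->]; split => //; apply: (idealMl hI).
  + by rewrite big_map scaler_sumr; apply: eq_bigr => p _; rewrite scalerA.
Qed.

Lemma submul_sub : is_submod P -> forall v, submul v -> P v.
Proof.
move=> sP v [s [H ->]]; apply: (submod_sum sP) => p /H [_ Pp].
exact: (submodZ sP).
Qed.

Lemma submulZ a v : I a -> P v -> submul (a *: v).
Proof.
move=> Ia Pv; exists [:: (a, v)]; rewrite big_seq1.
by split=> // p; rewrite inE => /eqP ->.
Qed.

End ProductSubmodule.

Section Nakayama.
Variables (A : comNzRingType) (m : A -> Prop) (hL : local_ring m) (V : lmodType A).

Lemma submul_lspan_cons (P : V -> Prop) (b : V) (t : seq V) u :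
  (forall v, P v -> lspan (b :: t) v) -> submul m P u ->
  exists a, m a /\ lspan t (u - a *: b).
Proof.
have hm := local_ideal hL; have sS := lspan_submod t.
move=> Pt [s [Hs ->]]; elim: s Hs => [|p s IHs] Hs.
  by exists 0; rewrite big_nil scale0r subrr; split; [apply: ideal0 | apply: submod0].
have [a [ma Ha]] := IHs (fun q qs => Hs q (mem_behead (s := p :: s) qs)).
have [mp /Pt /= [c [w0 [Hw0 Ep]]]] := Hs p (mem_head _ _).
exists (p.1 * c + a); split; first by apply: (idealD hm) => //; apply: (idealMr hm).
rewrite big_cons Ep.
have -> : p.1 *: (c *: b + w0) + \sum_(j <- s) j.1 *: j.2 - (p.1 * c + a) *: b
    = p.1 *: w0 + (\sum_(j <- s) j.1 *: j.2 - a *: b).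
  rewrite scalerDr scalerA scalerDl opprD !addrA; congr (_ - _).
  by set X := (p.1 * c) *: b; rewrite (addrC X) (addrAC _ X) addrK.
by apply: (submodD sS) => //; apply: (submodZ sS).
Qed.

(* Induction on the generators: [b = r (b - a b)] with [1 - a] invertible. *)
Lemma nakayama (P : V -> Prop) (t : seq V) :
  (forall b, b \in t -> P b) -> (forall v, P v -> lspan t v) ->
  (forall v, P v -> submul m P v) -> forall v, P v -> v = 0.
Proof.
move=> + + PmP; elim: t => [|b t IH] tP Pt; first by move=> v /Pt.
apply: IH => [c ct|w Pw]; first by apply: tP; rewrite inE ct orbT.
have sS := lspan_submod t.
have [a [ma Ha]] := submul_lspan_cons Pt (PmP b (tP b (mem_head _ _))).
have [r Hr] := local_1B_invertible hL ma.
have Sb : lspan t b.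
  have -> : b = r *: (b - a *: b) by rewrite -{2}[b]scale1r -scalerBl scalerA Hr scale1r.
  exact: (submodZ sS).
have /= [c [w0 [Hw0 ->]]] := Pt w Pw.
by apply: (submodD sS) => //; apply: (submodZ sS).
Qed.

End Nakayama.

Section KrullIntersection.
Variables (A : comNzRingType) (m : A -> Prop) (hL : local_ring m).
Variables (M : lmodType A) (gens : seq M).
Hypothesis hg : forall v, lspan gens v.

Let hm := local_ideal hL.
Let hN := local_noetherian hL.

Definition mpowM_inf (v : M) := forall n, mpowM m n v.

Lemma mpowM_inf_submod : is_submod mpowM_inf.
Proof.
split=> [n|u v Hu Hv n|a u Hu n]; have sP := mpowM_submod hm M n.
- exact: submod0.
- exact: submodD.
- exact: submodZ.
Qed.

Definition krull_complement (L : M -> Prop) :=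
  is_submod L /\ forall v, (L v /\ mpowM_inf v) <-> submul m mpowM_inf v.

Let is_max (L : M -> Prop) := forall L', krull_complement L' ->
  (forall v, L v -> L' v) -> forall v, L' v -> L v.

(* Once the chain [(L : a^k)] stabilises at [n], [L + a^n M] is again a Krull
   complement, hence equal to [L] by maximality. *)
Lemma krull_complement_pow L a : krull_complement L -> is_max L -> m a ->
  exists n, forall w, L (a ^+ n *: w).
Proof.
move=> [sL HL] Lmax ma; pose C k w := L (a ^+ k *: w).
have sC k : is_submod (C k).
  split; rewrite /C.
  - by rewrite scaler0; apply: submod0.
  - by move=> u w Hu Hw; rewrite scalerDr; apply: submodD.
  - by move=> r u Hu; rewrite scalerA mulrC -scalerA; apply: submodZ.
have mC k w : C k w -> C k.+1 w by rewrite /C exprS -scalerA; apply: submodZ.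
have [n Hn] := noetherian_chain_stable hN hg sC mC.
exists n; pose L' w := exists l u, L l /\ w = l + a ^+ n *: u.
have sL' : is_submod L'.
  split.
  - by exists 0, 0; rewrite scaler0 addr0; split => //; apply: submod0.
  - move=> u w [l [u' [Hl ->]]] [l2 [w' [Hl2 ->]]]; exists (l + l2), (u' + w').
    by split; [apply: submodD | rewrite scalerDr addrACA].
  - move=> r u [l [u' [Hl ->]]]; exists (r *: l), (r *: u').
    by split; [apply: submodZ | rewrite scalerDr !scalerA mulrC].
have LL' w : L w -> L' w by move=> Hw; exists w, 0; rewrite scaler0 addr0.
have mNL w : submul m mpowM_inf w -> L w by move=> /HL [].
suff CL' : krull_complement L'.
  by move=> w; apply: (Lmax L' CL' LL'); exists 0, w; split; [apply: submod0 | rewrite add0r].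
split => // w; split; last by move=> /HL [/LL' ? ?].
move=> [[l [u [Hl Ew]]] Nw].
have Lu : L (a ^+ n *: u).
  apply: Hn; rewrite /C exprS -scalerA.
  have -> : a *: (a ^+ n *: u) = a *: w - a *: l by rewrite Ew scalerDr addrC addKr.
  by apply: (submodB sL); [apply/mNL/submulZ | apply: submodZ].
by apply/HL; split => //; rewrite Ew; apply: submodD.
Qed.

(* A maximal Krull complement [L] contains [m^n M] for some [n], hence
   [∩ m^n M = (∩ m^n M) ∩ L = m (∩ m^n M)]. *)
Lemma mpowM_inf_submul v : mpowM_inf v -> submul m mpowM_inf v.
Proof.
have CmN : krull_complement (submul m mpowM_inf).
  split=> [|w]; first exact: submul_submod.
  by split=> [[]//|mNw]; split=> //; apply: submul_sub mpowM_inf_submod _ mNw.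
have [L [CL Lmax]] := noetherian_maximal hN (F := krull_complement) hg (fun _ => fst) CmN.
case: (CL) => sL HL; pose S e := forall w, L (e *: w).
have hS : is_ideal S.
  split=> [w|a b Ha Hb w|r a Ha w].
  - by rewrite scale0r; apply: submod0.
  - by rewrite scalerDl; apply: submodD.
  - by rewrite -scalerA; apply: submodZ.
have [cs [csm mcs]] := noetherian_lspan hN hm.
have [n Hn] := ipow_sub_of_gen_powers hS
  (fun c cc => krull_complement_pow CL Lmax (csm c cc)).
move=> Nv; apply/HL; split => //.
have [s [Hs ->]] := Nv n; apply: (submod_sum sL) => p ps.
by apply: Hn; apply: ipow_subset (Hs p ps).
Qed.

Lemma krull_intersection v : mpowM_inf v -> v = 0.
Proof.
have [t [tN Nt]] := noetherian_submod_fg hN mpowM_inf_submod (fun w _ => hg w).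
exact: (nakayama hL tN Nt (@mpowM_inf_submul)).
Qed.

End KrullIntersection.

(** * Regularity of the initial form of x *)

Section Regularity.
Variables (A : comNzRingType) (m : A -> Prop) (M : lmodType A).

Lemma CM_dim1_regular : CM_of_dim M m 1 ->
  exists2 y, m y & forall v : M, y *: v = 0 -> v = 0.
Proof.
case=> _ [[xs sz [xs_m xs_reg _]] _]; have x0 : (0 < size xs)%N by rewrite sz.
exists xs`_0 => [|v yv]; first exact: xs_m.
have := xs_reg 0%N x0 v; rewrite take0.
case=> [|ws ->]; last by rewrite big_ord0.
by exists [::]; rewrite yv big_ord0.
Qed.

(* If [x t = 0] then [(0, y^c t)] lies in [(m^n : x) ∩ m^c] for every [n]. *)
Lemma superficial_regular (hL : local_ring m) (gens : seq M) x y :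
  (forall v, lspan gens v) -> superficial ((A^o * M)%type) m x ->
  m y -> (forall v : M, y *: v = 0 -> v = 0) ->
  forall t : M, x *: t = 0 -> t = 0.
Proof.
have hm := local_ideal hL.
move=> hg [_ [c _ Hc]] my yreg t xt.
have yct : mpowM_inf m (y ^+ c *: t).
  move=> n; apply: (mpowM_mono (leq_addr c n)).
  apply: (mpowM_snd hm (v := (0, y ^+ c *: t))).
  apply/(Hc (n + c).+1); first by rewrite ltnS leq_addl.
  split; apply: (mpowM_pair hm).
  - by apply: (ipowMl hm); apply: (ipow0 hm).
  - rewrite /= scalerA mulrC -scalerA xt scaler0.
    exact: (submod0 (mpowM_submod hm _ _)).
  - exact: (ipow0 hm).
  - exact/mpowMZ/(ipow_expr hm).
have := krull_intersection hL hg yct.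
elim: (c) => [|k IH]; first by rewrite expr0 scale1r.
by rewrite exprS -scalerA => /yreg.
Qed.

End Regularity.

Lemma scale_submod (A : comNzRingType) (V : lmodType A) (P : V -> Prop) a :
  is_submod P -> is_submod (fun v => exists2 w, P w & v = a *: w).
Proof.
move=> sP; split.
- by exists 0; [apply: submod0 | rewrite scaler0].
- by move=> _ _ [u Pu ->] [w Pw ->]; exists (u + w); [apply: submodD | rewrite scalerDr].
- by move=> r _ [u Pu ->]; exists (r *: u); [apply: submodZ | rewrite !scalerA mulrC].
Qed.

Section ColonByX.
Variables (A : comNzRingType) (m : A -> Prop) (hm : is_ideal m).
Variables (M : lmodType A) (x : A) (l : nat).
Hypothesis colonM : forall i, (i < l)%N -> forall v : M,
  mpowM m i.+1 (x *: v) -> mpowM m i v.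
Hypothesis mpowM_l_sub : forall v : M, mpowM m l v -> exists w : M, v = x *: w.

Lemma mpowM_sub_xmul j (v : M) :
  mpowM m (l + j) v -> exists2 w, mpowM m (l + j).-1 w & v = x *: w.
Proof.
elim: j v => [|j IH] v.
  rewrite addn0 => /[dup] /mpowM_l_sub [w ->] Hxw; exists w => //.
  case: l colonM Hxw => [|l'] colonM' Hxw /=; first exact: mpowM0.
  exact: colonM'.
rewrite addnS; apply: mpowMS_ind (scale_submod x (mpowM_submod hm M _)) _ v.
move=> q u mq /IH [w Hw ->]; exists (q *: w); last by rewrite !scalerA mulrC.
apply: (mpowM_mono (p := (1 + (l + j).-1)%N)); first by rewrite add1n leqSpred.
exact: (mpowM_scale hm (ipow1 mq) Hw).
Qed.

Hypothesis xreg : forall t : M, x *: t = 0 -> t = 0.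

Lemma mpowM_colon_x i (z : M) :
  mpowM m i z -> mpowM m i.+2 (x *: z) -> mpowM m i.+1 z.
Proof.
move=> Hz; case: (ltnP i.+1 l) => [lt|le]; first exact: colonM.
rewrite -(subnKC (leqW le)) => /mpowM_sub_xmul [w Hw /eqP].
rewrite -subr_eq0 -scalerBr => /eqP /xreg /eqP; rewrite subr_eq0 => /eqP ->.
by rewrite subnKC ?(leqW le) in Hw.
Qed.

End ColonByX.

(* The initial form of [x] in [G(A)_1] is regular on [G(M)]. *)
Lemma depth_grM_ge1_initial_form (A : comNzRingType) (m : A -> Prop) (hm : is_ideal m)
  (M : lmodType A) x : m x ->
  (forall i (z : M), mpowM m i z -> mpowM m i.+2 (x *: z) -> mpowM m i.+1 z) ->
  depth_grM_ge1 M m.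
Proof.
move=> mx colon; exists [:: 0; x]; split.
- case=> [|[|i]]; [done | exact: ipow1 | rewrite [_`_ _]/= nth_nil; exact: (ipow0 hm)].
- exact: (ipow0 hm).
move=> w Hw Hact i; apply: colon; first exact: Hw.
have := Hact i.+1.
rewrite big_ord_recl big_ord_recl big1 => [|j _]; last by rewrite /= nth_nil scale0r.
by rewrite /= scale0r add0r addr0 subn1.
Qed.

Unset Implicit Arguments.
Set Strict Implicit.

Theorem lemma4p5 (A : comNzRingType) (m : A -> Prop) (d : nat)
  (M : lmodType A) (l : nat) (x : A) :
  local_ring m -> infinite_residue m ->
  (0 < d)%N -> CM_of_dim (A^o) m d ->
  fin_gen M -> CM_of_dim M m 1 ->
  presentation_in_pow M m l ->
  depth_grA_ge1 m ->
  superficial ((A^o * M)%type) m x ->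
  (forall i, (i < l)%N -> forall v : M, mpowM m i.+1 (x *: v) <-> mpowM m i v) /\
  ((forall v : M, mpowM m l v -> exists w : M, v = x *: w) -> depth_grM_ge1 M m).
Proof.
move=> hL _ _ _ hfg hCM hP hG hx.
have hm := local_ideal hL.
have mx : m x by case: hx.
have colonM := presentation_colon hm (superficial_colon hm hG hx) hP.
split=> [i il v|mlM_sub].
  by split; [apply: colonM | apply: (mpowM_scale hm (ipow1 mx))].
have [gens hg] := fin_gen_lspan hfg.
have [y my yreg] := CM_dim1_regular hCM.
have xreg := superficial_regular hL hg hx my yreg.
apply: (depth_grM_ge1_initial_form hm mx).
exact: (mpowM_colon_x hm colonM mlM_sub xreg).
Qed.
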